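(* Let $\lambda\in ba(\mathcal A)$ and $\mathscr M\subset ba(\mathcal A)$. There is a unique way of writing $\lambda=\lambda^c_{\mathscr M}+\lambda^\perp_{\mathscr M}$ with $\lambda^c_{\mathscr M},\lambda^\perp_{\mathscr M}\in ba(\mathcal A)$ such that (i) $\lambda^c_{\mathscr M}\ll m$ for some $m\in\mathbf A(\mathscr M)$, and (ii) $\lambda^\perp_{\mathscr M}\perp\mu$ for every $\mu\in\mathscr M$. If $\lambda$ is positive (resp. countably additive), then so are $\lambda^c_{\mathscr M}$ and $\lambda^\perp_{\mathscr M}$.
   Context: $\Omega$ is a set, $\mathcal A$ an algebra of subsets of $\Omega$, $ba(\mathcal A)$ the Banach lattice of bounded finitely additive real set functions on $\mathcal A$ with norm $\|\mu\|=|\mu|(\Omega)$, where $|\mu|$ is the total variation of $\mu$. For $\lambda,\mu\in ba(\mathcal A)$: $\mu\ll\lambda$ (also written $\lambda\gg\mu$) means that for every $\varepsilon>0$ there is $\delta>0$ with $|\lambda|(A)<\delta\Rightarrow|\mu|(A)<\varepsilon$ ($A\in\mathcal A$); $\mu\perp\lambda$ means that for every $\varepsilon>0$ there is $A\in\mathcal A$ with $|\mu|(A)+|\lambda|(A^c)<\varepsilon$. For $\mathscr M\subset ba(\mathcal A)$, $\mathbf A(\mathscr M)=\{\sum_n\alpha_n\frac{|\mu_n|}{1\vee\|\mu_n\|}:\mu_n\in\mathscr M,\ \alpha_n\ge0,\ \sum_n\alpha_n=1\}$ (countable convex combinations). *)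

From Stdlib Require Import Reals Lra List Classical ClassicalEpsilon.
Open Scope R_scope.

Definition setT {Omega : Type} : Omega -> Prop := fun _ => True.
Definition set0 {Omega : Type} : Omega -> Prop := fun _ => False.
Definition setC {Omega : Type} (A : Omega -> Prop) : Omega -> Prop := fun x => ~ A x.
Definition setU {Omega : Type} (A B : Omega -> Prop) : Omega -> Prop := fun x => A x \/ B x.
Definition disjoint {Omega : Type} (A B : Omega -> Prop) : Prop := forall x, ~ (A x /\ B x).

Definition is_algebra {Omega : Type} (Alg : (Omega -> Prop) -> Prop) : Prop :=
  Alg setT /\
  (forall A, Alg A -> Alg (setC A)) /\
  (forall A B, Alg A -> Alg B -> Alg (setU A B)).

(* Supremum of a set of reals (0 if empty or unbounded). *)
Definition Rsup (E : R -> Prop) : R :=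
  match excluded_middle_informative (bound E /\ (exists x, E x)) with
  | left H => proj1_sig (completeness E (proj1 H) (proj2 H))
  | right _ => 0
  end.

Definition Rsum_list (l : list R) : R := fold_right Rplus 0 l.

Definition is_partition {Omega : Type} (Alg : (Omega -> Prop) -> Prop)
  (A : Omega -> Prop) (l : list (Omega -> Prop)) : Prop :=
  (forall B, In B l -> Alg B) /\
  (forall i j, (i < j)%nat -> (j < length l)%nat -> disjoint (nth i l set0) (nth j l set0)) /\
  (forall x, A x <-> exists B, In B l /\ B x).

Definition tv {Omega : Type} (Alg : (Omega -> Prop) -> Prop)
  (mu : (Omega -> Prop) -> R) (A : Omega -> Prop) : R :=
  Rsup (fun s => exists l, is_partition Alg A l /\
                            s = Rsum_list (map (fun B => Rabs (mu B)) l)).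

Definition ba_norm {Omega : Type} (Alg : (Omega -> Prop) -> Prop)
  (mu : (Omega -> Prop) -> R) : R := tv Alg mu setT.

Definition is_ba {Omega : Type} (Alg : (Omega -> Prop) -> Prop)
  (mu : (Omega -> Prop) -> R) : Prop :=
  (forall A B, Alg A -> Alg B -> disjoint A B -> mu (setU A B) = mu A + mu B) /\
  (exists K, forall A, Alg A -> Rabs (mu A) <= K).

Definition abs_cont {Omega : Type} (Alg : (Omega -> Prop) -> Prop)
  (mu lam : (Omega -> Prop) -> R) : Prop :=
  forall eps, 0 < eps -> exists delta, 0 < delta /\
    forall A, Alg A -> tv Alg lam A < delta -> tv Alg mu A < eps.

Definition singular {Omega : Type} (Alg : (Omega -> Prop) -> Prop)
  (mu lam : (Omega -> Prop) -> R) : Prop :=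
  forall eps, 0 < eps -> exists A, Alg A /\ tv Alg mu A + tv Alg lam (setC A) < eps.

Definition in_AM {Omega : Type} (Alg : (Omega -> Prop) -> Prop)
  (M : ((Omega -> Prop) -> R) -> Prop) (m : (Omega -> Prop) -> R) : Prop :=
  exists (mu : nat -> (Omega -> Prop) -> R) (alpha : nat -> R),
    (forall n, M (mu n)) /\ (forall n, 0 <= alpha n) /\ infinite_sum alpha 1 /\
    forall A, Alg A ->
      infinite_sum (fun n => alpha n * (tv Alg (mu n) A / Rmax 1 (ba_norm Alg (mu n)))) (m A).

Definition positive_sf {Omega : Type} (Alg : (Omega -> Prop) -> Prop)
  (mu : (Omega -> Prop) -> R) : Prop := forall A, Alg A -> 0 <= mu A.

Definition countably_additive {Omega : Type} (Alg : (Omega -> Prop) -> Prop)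
  (mu : (Omega -> Prop) -> R) : Prop :=
  forall (An : nat -> Omega -> Prop),
    (forall n, Alg (An n)) ->
    (forall i j, i <> j -> disjoint (An i) (An j)) ->
    Alg (fun x => exists n, An n x) ->
    infinite_sum (fun n => mu (An n)) (mu (fun x => exists n, An n x)).

Definition M_decomposition {Omega : Type} (Alg : (Omega -> Prop) -> Prop)
  (M : ((Omega -> Prop) -> R) -> Prop) (lam lc lp : (Omega -> Prop) -> R) : Prop :=
  is_ba Alg lc /\ is_ba Alg lp /\
  (forall A, Alg A -> lam A = lc A + lp A) /\
  (exists m, in_AM Alg M m /\ abs_cont Alg lc m) /\
  (forall mu, M mu -> singular Alg lp mu).

From Stdlib Require Import Reals Lra Lia List Classical ClassicalEpsilon
  FunctionalExtensionality PropExtensionality Cantor.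
Open Scope R_scope.

(** For a charge [phi] and a positive control [m], the infimum over
    [d > 0] of [sup {phi B | B in A, m B < d}] defines [sing_part phi m], an
    additive part of [phi] singular to [m] whose remainder is uniformly
    [m]-continuous.  With the trivial control this gives the positive
    variation, and the total variation is [pos_var phi + pos_var (-phi)].
    Controls [control s = sum 2^-(n+1) |s n| / (1 v ||s n||)] built from
    sequences [s] in [M] are compared by inclusion of sequences; a diagonal
    sequence minimises the residual [sing_part |lam| (control s) Omega], and
    for this best control the singular part is singular to each [mu] in [M]
    (putting [mu] in front of the sequence cannot lower the residual).
    Splitting [lam+] and [lam-] along the best control gives existence;
    positivity and countable additivity pass to parts by domination.
    Uniqueness: the difference of two decompositions is both absolutely
    continuous w.r.t. and singular to [m + m'], hence zero. *)

Lemma set_ext {O : Type} (A B : O -> Prop) : (forall x, A x <-> B x) -> A = B.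
Proof.
  intro h; apply functional_extensionality; intro x.
  apply propositional_extensionality; auto.
Qed.

Definition subset {O : Type} (A B : O -> Prop) : Prop := forall x, A x -> B x.
Definition setI {O : Type} (A B : O -> Prop) : O -> Prop := fun x => A x /\ B x.
Definition setD {O : Type} (A B : O -> Prop) : O -> Prop := fun x => A x /\ ~ B x.

Lemma Rsup_ub (E : R -> Prop) x : bound E -> E x -> x <= Rsup E.
Proof.
  intros hb hx; unfold Rsup; destruct excluded_middle_informative as [h | h].
  - destruct completeness as [s [hs hl]]; simpl; apply hs; auto.
  - exfalso; apply h; eauto.
Qed.

Lemma Rsup_le (E : R -> Prop) c : (exists x, E x) -> (forall x, E x -> x <= c) -> Rsup E <= c.
Proof.
  intros hx hc; unfold Rsup; destruct excluded_middle_informative as [h | h].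
  - destruct completeness as [s [hu hs]]; simpl; apply hs; intros y hy; auto.
  - exfalso; apply h; split; [exists c; intros y hy; auto | auto].
Qed.

Lemma Rsup_approx (E : R -> Prop) eta : 0 < eta -> (exists x, E x) -> exists x, E x /\ Rsup E - eta < x.
Proof.
  intros he hx; apply NNPP; intro hno.
  assert (Rsup E <= Rsup E - eta); [| lra].
  apply Rsup_le; auto; intros x ex; apply Rnot_lt_le; intro hlt; apply hno; eauto.
Qed.

Definition Rinf (E : R -> Prop) : R := - Rsup (fun x => E (- x)).

Lemma Rinf_lb (E : R -> Prop) x : (forall y, E y -> 0 <= y) -> E x -> Rinf E <= x.
Proof.
  intros h0 hx; unfold Rinf.
  enough (- x <= Rsup (fun y => E (- y))) by lra.
  apply Rsup_ub.
  - exists 0; intros y hy; specialize (h0 _ hy); lra.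
  - rewrite Ropp_involutive; auto.
Qed.

Lemma Rinf_nonneg (E : R -> Prop) : (forall y, E y -> 0 <= y) -> (exists x, E x) -> 0 <= Rinf E.
Proof.
  intros h0 [x hx]; unfold Rinf.
  enough (Rsup (fun y => E (- y)) <= 0) by lra.
  apply Rsup_le; [exists (- x); rewrite Ropp_involutive; auto |].
  intros y hy; specialize (h0 _ hy); lra.
Qed.

Lemma Rinf_approx (E : R -> Prop) eta : 0 < eta -> (exists x, E x) -> exists x, E x /\ x <= Rinf E + eta.
Proof.
  intros he [x0 hx0]; apply NNPP; intro hno.
  assert (hsup : Rsup (fun y => E (- y)) <= - (Rinf E + eta)).
  { apply Rsup_le; [exists (- x0); rewrite Ropp_involutive; auto |].
    intros y hy; apply Rnot_lt_le; intro hlt; apply hno; exists (- y); split; auto; lra. }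
  unfold Rinf at 1 in hsup; lra.
Qed.

Lemma le_epsilon x y : (forall eta, 0 < eta -> x <= y + eta) -> x <= y.
Proof. intro h; apply Rnot_lt_le; intro l; specialize (h ((x - y) / 2)); lra. Qed.

Lemma Rabs_bounds x K : Rabs x <= K -> - K <= x <= K.
Proof. unfold Rabs; destruct Rcase_abs; intros; lra. Qed.

Lemma cv_le u l c : Un_cv u l -> (forall n, u n <= c) -> l <= c.
Proof.
  intros h b; apply Rnot_lt_le; intro k; destruct (h (l - c)) as [N hN]; [lra |].
  specialize (hN N (le_n N)); specialize (b N); unfold Rdist in hN; apply Rabs_def2 in hN; lra.
Qed.

Definition series_sum (a : nat -> R) : R :=
  match excluded_middle_informative (exists l, infinite_sum a l) with
  | left H => proj1_sig (constructive_indefinite_description _ H)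
  | right _ => 0
  end.

Lemma series_sum_spec a : (exists l, infinite_sum a l) -> infinite_sum a (series_sum a).
Proof.
  intro h; unfold series_sum; destruct excluded_middle_informative as [H | H]; [| tauto].
  destruct constructive_indefinite_description; auto.
Qed.

Lemma sum_nonneg a n : (forall i, 0 <= a i) -> 0 <= sum_f_R0 a n.
Proof. intro p; induction n; simpl; auto; specialize (p (S n)); lra. Qed.

Lemma sum_mono_index a n k : (forall i, 0 <= a i) -> (n <= k)%nat -> sum_f_R0 a n <= sum_f_R0 a k.
Proof. intros p h; induction h; [lra |]; rewrite tech5; specialize (p (S m)); lra. Qed.

Lemma sum_increment_le a b N j : (forall i, a i <= b i) ->
  sum_f_R0 a (N + j) - sum_f_R0 a N <= sum_f_R0 b (N + j) - sum_f_R0 b N.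
Proof.
  intro h; induction j; [rewrite Nat.add_0_r; lra |].
  rewrite Nat.add_succ_r, !tech5; specialize (h (S (N + j))); lra.
Qed.

Lemma weights_tail alpha eps : infinite_sum alpha 1 -> 0 < eps ->
  exists N, forall N', (N <= N')%nat -> 1 - sum_f_R0 alpha N' < eps.
Proof.
  intros hs he; destruct (hs eps he) as [N hN]; exists N; intros N' h; specialize (hN N' h).
  unfold Rdist in hN; apply Rabs_def2 in hN; lra.
Qed.

Definition geom (n : nat) : R := (/ 2) ^ (S n).

Lemma geom_pos n : 0 < geom n.
Proof. unfold geom; apply pow_lt; lra. Qed.

Lemma geom_nonneg n : 0 <= geom n.
Proof. apply Rlt_le, geom_pos. Qed.

Lemma geom_sum : infinite_sum geom 1.
Proof.
  assert (hs : forall N, sum_f_R0 geom N = 1 - (/ 2) ^ (S N)).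
  { induction N; [unfold geom; simpl; lra |]; rewrite tech5, IHN; unfold geom; simpl; lra. }
  intros eps he; destruct (pow_lt_1_zero (/ 2)) with eps as [N hN]; auto;
    [rewrite Rabs_right; lra |].
  exists N; intros n hn; unfold Rdist; rewrite hs.
  replace (1 - (/ 2) ^ S n - 1) with (- (/ 2) ^ S n) by ring; rewrite Rabs_Ropp; apply hN; lia.
Qed.
Section Charges.
Context {O : Type}.
Variable Alg : (O -> Prop) -> Prop.
Hypothesis HA : is_algebra Alg.

Lemma alg_setT : Alg setT.
Proof. apply HA. Qed.

Lemma alg_setC A : Alg A -> Alg (setC A).
Proof. apply HA. Qed.

Lemma alg_setU A B : Alg A -> Alg B -> Alg (setU A B).
Proof. apply HA. Qed.

Lemma alg_set0 : Alg set0.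
Proof.
  replace (@set0 O) with (setC (@setT O))
    by (apply set_ext; unfold setC, setT, set0; tauto).
  apply alg_setC, alg_setT.
Qed.

Lemma alg_setI A B : Alg A -> Alg B -> Alg (setI A B).
Proof.
  intros hA hB; replace (setI A B) with (setC (setU (setC A) (setC B))).
  - apply alg_setC, alg_setU; apply alg_setC; auto.
  - apply set_ext; unfold setC, setU, setI; intro x; tauto.
Qed.

Lemma alg_setD A B : Alg A -> Alg B -> Alg (setD A B).
Proof. intros; apply alg_setI; auto; apply alg_setC; auto. Qed.

#[local] Hint Resolve alg_setT alg_setC alg_setU alg_set0 alg_setI alg_setD : alg.

Definition additive (phi : (O -> Prop) -> R) : Prop :=
  forall A B, Alg A -> Alg B -> disjoint A B -> phi (setU A B) = phi A + phi B.
Definition bounded (phi : (O -> Prop) -> R) : Prop :=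
  exists K, forall A, Alg A -> Rabs (phi A) <= K.

Section Additive.
Variable phi : (O -> Prop) -> R.
Hypothesis Hadd : additive phi.

Lemma additive_set0 : phi set0 = 0.
Proof.
  assert (h := Hadd set0 set0 alg_set0 alg_set0).
  replace (setU set0 set0) with (@set0 O) in h by (apply set_ext; unfold setU, set0; tauto).
  assert (d0 : disjoint (@set0 O) set0) by (unfold disjoint, set0; tauto); specialize (h d0); lra.
Qed.

Lemma additive_split A C : Alg A -> Alg C -> phi A = phi (setI A C) + phi (setD A C).
Proof.
  intros hA hC; rewrite <- Hadd; auto with alg.
  - f_equal; apply set_ext; unfold setU, setI, setD; intro x; tauto.
  - unfold disjoint, setI, setD; intro x; tauto.
Qed.

Lemma additive_sub B A : Alg A -> Alg B -> subset B A -> phi A = phi B + phi (setD A B).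
Proof.
  intros hA hB hs; rewrite (additive_split A B) by auto.
  do 2 f_equal; apply set_ext; unfold setI; intro x; split; [tauto | auto].
Qed.

Lemma additive_compl A : Alg A -> phi setT = phi A + phi (setC A).
Proof.
  intro hA; rewrite <- Hadd; auto with alg.
  - f_equal; apply set_ext; unfold setU, setC, setT; intro x; tauto.
  - unfold disjoint, setC; tauto.
Qed.

Hypothesis Hpos : positive_sf Alg phi.

Lemma positive_mono B A : Alg A -> Alg B -> subset B A -> phi B <= phi A.
Proof.
  intros hA hB hs; rewrite (additive_sub B A) by auto.
  assert (0 <= phi (setD A B)) by (apply Hpos; auto with alg); lra.
Qed.

Lemma positive_subadd X Y : Alg X -> Alg Y -> phi (setU X Y) <= phi X + phi Y.
Proof.
  intros hX hY; replace (setU X Y) with (setU X (setD Y X)).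
  - rewrite Hadd; auto with alg; [| unfold disjoint, setD; tauto].
    assert (phi (setD Y X) <= phi Y) by (apply positive_mono; auto with alg; intros z [u _]; exact u).
    lra.
  - apply set_ext; intro z; unfold setU, setD; split; [tauto |].
    intros [u | u]; [left; auto |]; destruct (classic (X z)); tauto.
Qed.
End Additive.

Section Closure.
Variables a b : (O -> Prop) -> R.

Lemma additive_plus : additive a -> additive b -> additive (fun A => a A + b A).
Proof. intros f g A B x y d; rewrite f, g; auto; lra. Qed.

Lemma additive_minus : additive a -> additive b -> additive (fun A => a A - b A).
Proof. intros f g A B x y d; rewrite f, g; auto; lra. Qed.

Lemma bounded_plus : bounded a -> bounded b -> bounded (fun A => a A + b A).
Proof.
  intros [K f] [L g]; exists (K + L); intros A x.
  specialize (f A x); specialize (g A x).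
  apply Rabs_bounds in f; apply Rabs_bounds in g; apply Rabs_le; lra.
Qed.

Lemma bounded_minus : bounded a -> bounded b -> bounded (fun A => a A - b A).
Proof.
  intros [K f] [L g]; exists (K + L); intros A x.
  specialize (f A x); specialize (g A x).
  apply Rabs_bounds in f; apply Rabs_bounds in g; apply Rabs_le; lra.
Qed.

Lemma bounded_dom : bounded b -> (forall A, Alg A -> 0 <= a A <= b A) -> bounded a.
Proof.
  intros [K f] h; exists K; intros A x; specialize (h A x); specialize (f A x).
  apply Rabs_bounds in f; apply Rabs_le; lra.
Qed.
End Closure.

(** Singularity [singular Alg mu lam] is [psing (tv Alg mu) (tv Alg lam)]. *)
Definition psing (nu kappa : (O -> Prop) -> R) : Prop :=
  forall eps, 0 < eps -> exists A, Alg A /\ nu A + kappa (setC A) < eps.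

(** [ucont a m]: [a] is uniformly small on sets of small [m]-measure;
    for positive [m] this is [abs_cont Alg a m] at the level of values. *)
Definition ucont (a m : (O -> Prop) -> R) : Prop :=
  forall eps, 0 < eps -> exists d, 0 < d /\ forall B, Alg B -> m B < d -> a B < eps.

Definition small_sup (phi m : (O -> Prop) -> R) (d : R) (A : O -> Prop) : R :=
  Rsup (fun x => exists B, Alg B /\ subset B A /\ m B < d /\ x = phi B).

Definition sing_part (phi m : (O -> Prop) -> R) (A : O -> Prop) : R :=
  Rinf (fun y => exists d, 0 < d /\ y = small_sup phi m d A).

Lemma setU_setC (B : O -> Prop) : setU B (setC B) = setT.
Proof. apply set_ext; unfold setU, setC, setT; intro x; split; auto; intros _; apply classic. Qed.

Section SmallSup.
Variables phi m : (O -> Prop) -> R.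
Hypothesis Hadd : additive phi.
Hypothesis Hbd : bounded phi.
Hypothesis Hmadd : additive m.
Hypothesis Hmpos : positive_sf Alg m.

Lemma small_sup_inhabited d A : 0 < d ->
  exists x, exists B, Alg B /\ subset B A /\ m B < d /\ x = phi B.
Proof.
  intro hd; exists (phi set0), set0; repeat split; auto with alg; [intros x [] |].
  rewrite (additive_set0 m Hmadd); auto.
Qed.

Lemma small_sup_ge d A B : Alg B -> subset B A -> m B < d -> phi B <= small_sup phi m d A.
Proof.
  intros; apply Rsup_ub; [| eauto 10].
  destruct Hbd as [K HK]; exists K; intros x [C [hC [_ [_ ->]]]].
  specialize (HK C hC); apply Rabs_bounds in HK; lra.
Qed.

Lemma small_sup_le d A c : 0 < d ->
  (forall B, Alg B -> subset B A -> m B < d -> phi B <= c) -> small_sup phi m d A <= c.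
Proof.
  intros hd h; apply Rsup_le; [apply small_sup_inhabited; auto | intros x [B [? [? [? ->]]]]; auto].
Qed.

Lemma small_sup_nonneg d A : 0 < d -> 0 <= small_sup phi m d A.
Proof.
  intro hd; rewrite <- (additive_set0 phi Hadd).
  apply small_sup_ge; auto with alg; [intros x [] |].
  rewrite (additive_set0 m Hmadd); auto.
Qed.

Lemma small_sup_approx d A eta : 0 < d -> 0 < eta ->
  exists B, Alg B /\ subset B A /\ m B < d /\ small_sup phi m d A - eta < phi B.
Proof.
  intros hd he.
  destruct (Rsup_approx _ eta he (small_sup_inhabited d A hd)) as [x [[B [? [? [? ->]]]] hx]].
  exists B; auto.
Qed.

Lemma small_sup_mono d1 d2 A : 0 < d1 -> d1 <= d2 -> small_sup phi m d1 A <= small_sup phi m d2 A.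
Proof. intros h1 h2; apply small_sup_le; auto; intros; apply small_sup_ge; auto; lra. Qed.

Lemma small_sup_union_le d A1 A2 : 0 < d -> Alg A1 -> Alg A2 ->
  small_sup phi m d (setU A1 A2) <= small_sup phi m d A1 + small_sup phi m d A2.
Proof.
  intros hd h1 h2; apply small_sup_le; auto; intros B hB hs hm.
  rewrite (additive_split phi Hadd B A1) by auto.
  assert (m (setI B A1) <= m B) by (apply positive_mono; auto with alg; intros x [u _]; exact u).
  assert (m (setD B A1) <= m B) by (apply positive_mono; auto with alg; intros x [u _]; exact u).
  apply Rplus_le_compat; apply small_sup_ge; auto with alg; try lra.
  - intros x [_ u]; exact u.
  - intros x [bx nx]; destruct (hs x bx); tauto.
Qed.

Lemma small_sup_union_ge d1 d2 A1 A2 : 0 < d1 -> 0 < d2 -> Alg A1 -> Alg A2 -> disjoint A1 A2 ->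
  small_sup phi m d1 A1 + small_sup phi m d2 A2 <= small_sup phi m (d1 + d2) (setU A1 A2).
Proof.
  intros h1 h2 a1 a2 dj.
  enough (small_sup phi m d1 A1 <= small_sup phi m (d1 + d2) (setU A1 A2) - small_sup phi m d2 A2)
    by lra.
  apply small_sup_le; auto; intros B1 b1 s1 l1.
  enough (small_sup phi m d2 A2 <= small_sup phi m (d1 + d2) (setU A1 A2) - phi B1) by lra.
  apply small_sup_le; auto; intros B2 b2 s2 l2.
  assert (dB : disjoint B1 B2) by (intros x [u v]; apply (dj x); auto).
  assert (hU : phi (setU B1 B2) <= small_sup phi m (d1 + d2) (setU A1 A2)).
  { apply small_sup_ge; auto with alg; [intros x [u | u]; [left | right]; auto |].
    rewrite Hmadd; auto; lra. }
  rewrite Hadd in hU; auto; lra.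
Qed.

Lemma small_sup_compl d B : 0 < d -> Alg B -> m B < d / 2 ->
  phi B + small_sup phi m (d / 2) (setC B) <= small_sup phi m d setT.
Proof.
  intros hd hB hm.
  assert (phi B <= small_sup phi m (d / 2) B) by (apply small_sup_ge; auto; intros x u; exact u).
  assert (h := small_sup_union_ge (d / 2) (d / 2) B (setC B)).
  rewrite setU_setC in h; replace (d / 2 + d / 2) with d in h by field.
  assert (dB : disjoint B (setC B)) by (unfold disjoint, setC; tauto).
  specialize (h ltac:(lra) ltac:(lra) hB (alg_setC B hB) dB); lra.
Qed.

Lemma sing_part_le d A : 0 < d -> sing_part phi m A <= small_sup phi m d A.
Proof.
  intro hd; apply Rinf_lb; [intros y [e [he ->]]; apply small_sup_nonneg; auto | eauto].
Qed.

Lemma sing_part_nonneg A : 0 <= sing_part phi m A.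
Proof.
  apply Rinf_nonneg; [intros y [e [he ->]]; apply small_sup_nonneg; auto |].
  exists (small_sup phi m 1 A), 1; split; auto; lra.
Qed.

Lemma sing_part_approx A eta : 0 < eta ->
  exists d, 0 < d /\ small_sup phi m d A <= sing_part phi m A + eta.
Proof.
  intro he.
  destruct (Rinf_approx (fun y => exists d, 0 < d /\ y = small_sup phi m d A) eta he)
    as [x [[d [hd ->]] hx]]; eauto.
Qed.

Lemma sing_part_additive : additive (sing_part phi m).
Proof.
  intros A1 A2 a1 a2 dj; apply Rle_antisym; apply le_epsilon; intros eta he.
  - destruct (sing_part_approx A1 (eta / 2)) as [d1 [h1 k1]]; [lra |].
    destruct (sing_part_approx A2 (eta / 2)) as [d2 [h2 k2]]; [lra |].
    assert (hd : 0 < Rmin d1 d2) by (apply Rmin_glb_lt; auto).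
    assert (e1 := sing_part_le _ (setU A1 A2) hd).
    assert (e2 := small_sup_union_le _ A1 A2 hd a1 a2).
    assert (e3 := small_sup_mono _ _ A1 hd (Rmin_l d1 d2)).
    assert (e4 := small_sup_mono _ _ A2 hd (Rmin_r d1 d2)); lra.
  - destruct (sing_part_approx (setU A1 A2) eta) as [d [h k]]; [lra |].
    assert (hd : 0 < d / 2) by lra.
    assert (e1 := sing_part_le _ A1 hd); assert (e2 := sing_part_le _ A2 hd).
    assert (e3 := small_sup_union_ge _ _ A1 A2 hd hd a1 a2 dj).
    replace (d / 2 + d / 2) with d in e3 by field; lra.
Qed.

Lemma sing_part_le_self A : positive_sf Alg phi -> Alg A -> sing_part phi m A <= phi A.
Proof.
  intros Hpos hA; apply Rle_trans with (small_sup phi m 1 A); [apply sing_part_le; lra |].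
  apply small_sup_le; [lra |]; intros; apply positive_mono; auto.
Qed.

(** A set [B] of small [m]-measure carrying almost all of [small_sup] leaves
    a complement with small singular part. *)
Lemma sing_part_singular : psing (sing_part phi m) m.
Proof.
  intros eps he; set (eta := eps / 4).
  destruct (sing_part_approx setT eta) as [d0 [h0 k0]]; [unfold eta; lra |].
  set (d1 := Rmin (d0 / 2) (eps / 2)).
  assert (hd1 : 0 < d1) by (apply Rmin_glb_lt; lra).
  destruct (small_sup_approx d1 setT eta) as [B [hB [_ [mB kB]]]]; [auto | unfold eta; lra |].
  assert (d1 <= d0 / 2) by apply Rmin_l; assert (d1 <= eps / 2) by apply Rmin_r.
  assert (t1 := sing_part_le _ setT hd1).
  assert (t2 := small_sup_compl d0 B h0 hB ltac:(lra)).
  assert (t3 := sing_part_le (d0 / 2) (setC B) ltac:(lra)).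
  exists (setC B); split; auto with alg.
  replace (setC (setC B)) with B by (apply set_ext; unfold setC; intro; tauto).
  unfold eta in *; lra.
Qed.

Lemma sing_part_abs_cont : ucont (fun A => phi A - sing_part phi m A) m.
Proof.
  intros eps he; destruct (sing_part_approx setT (eps / 2)) as [d0 [h0 k0]]; [lra |].
  exists (d0 / 2); split; [lra |]; intros A hA mA.
  assert (t1 := small_sup_compl d0 A h0 hA mA).
  assert (t2 := sing_part_le (d0 / 2) (setC A) ltac:(lra)).
  assert (t3 := additive_compl _ sing_part_additive A hA); lra.
Qed.
End SmallSup.

Lemma sing_part_mono_control phi m m' : additive phi -> bounded phi ->
  additive m -> additive m' -> positive_sf Alg m -> positive_sf Alg m' ->
  ucont m' m -> forall A, sing_part phi m A <= sing_part phi m' A.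
Proof.
  intros f b fm fm' pm pm' dom A; apply le_epsilon; intros eta he.
  destruct (sing_part_approx phi m' A eta he) as [d' [hd' k]].
  destruct (dom d' hd') as [d [hd kd]].
  assert (sing_part phi m A <= small_sup phi m d A) by (apply sing_part_le; auto).
  assert (small_sup phi m d A <= small_sup phi m' d' A); [| lra].
  apply small_sup_le; auto; intros B hB s l; apply small_sup_ge; auto.
Qed.

Lemma sing_part_mono phi1 phi2 m : additive phi1 -> bounded phi1 -> additive phi2 -> bounded phi2 ->
  additive m -> positive_sf Alg m -> (forall A, Alg A -> phi1 A <= phi2 A) ->
  forall A, sing_part phi1 m A <= sing_part phi2 m A.
Proof.
  intros f1 b1 f2 b2 fm pm le A; apply le_epsilon; intros eta he.
  destruct (sing_part_approx phi2 m A eta he) as [d [hd k]].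
  assert (sing_part phi1 m A <= small_sup phi1 m d A) by (apply sing_part_le; auto).
  assert (small_sup phi1 m d A <= small_sup phi2 m d A); [| lra].
  apply small_sup_le; auto; intros B hB s l.
  apply Rle_trans with (phi2 B); auto; apply small_sup_ge; auto.
Qed.

Definition zero_sf : (O -> Prop) -> R := fun _ => 0.
Definition opp_sf (phi : (O -> Prop) -> R) : (O -> Prop) -> R := fun A => - phi A.
Definition pos_var (phi : (O -> Prop) -> R) (A : O -> Prop) : R := small_sup phi zero_sf 1 A.

Lemma zero_additive : additive zero_sf.
Proof. intros A B _ _ _; unfold zero_sf; lra. Qed.

Lemma zero_positive : positive_sf Alg zero_sf.
Proof. intros A _; unfold zero_sf; lra. Qed.

Lemma opp_additive phi : additive phi -> additive (opp_sf phi).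
Proof. intros h A B a b d; unfold opp_sf; rewrite h; auto; lra. Qed.

Lemma opp_bounded phi : bounded phi -> bounded (opp_sf phi).
Proof. intros [K h]; exists K; intros A a; unfold opp_sf; rewrite Rabs_Ropp; auto. Qed.

#[local] Hint Resolve zero_additive zero_positive opp_additive opp_bounded : alg.

Section PosVar.
Variable phi : (O -> Prop) -> R.
Hypothesis Hadd : additive phi.
Hypothesis Hbd : bounded phi.

Lemma pos_var_ge A B : Alg B -> subset B A -> phi B <= pos_var phi A.
Proof. intros; apply small_sup_ge; auto; unfold zero_sf; lra. Qed.

Lemma pos_var_le A c : (forall B, Alg B -> subset B A -> phi B <= c) -> pos_var phi A <= c.
Proof. intros; apply small_sup_le; auto with alg; lra. Qed.

Lemma pos_var_nonneg A : 0 <= pos_var phi A.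
Proof. apply small_sup_nonneg; auto with alg; lra. Qed.

Lemma pos_var_ge_self A : Alg A -> phi A <= pos_var phi A.
Proof. intro; apply pos_var_ge; auto; intros x u; exact u. Qed.

Lemma small_sup_zero d A : 0 < d -> small_sup phi zero_sf d A = pos_var phi A.
Proof.
  intro hd; apply Rle_antisym.
  - apply small_sup_le; auto with alg; intros; apply pos_var_ge; auto.
  - apply pos_var_le; intros; apply small_sup_ge; auto; unfold zero_sf; lra.
Qed.

Lemma pos_var_additive : additive (pos_var phi).
Proof.
  intros A1 A2 a1 a2 dj; apply Rle_antisym.
  - apply small_sup_union_le; auto with alg; lra.
  - assert (h : 0 < 1 / 2) by lra.
    assert (e := small_sup_union_ge phi zero_sf Hadd Hbd zero_additive (1 / 2) (1 / 2) A1 A2 h h a1 a2 dj).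
    rewrite !small_sup_zero in e by lra; exact e.
Qed.

Lemma pos_var_bounded : bounded (pos_var phi).
Proof.
  destruct Hbd as [K HK]; exists K; intros A a.
  rewrite Rabs_right by (apply Rle_ge, pos_var_nonneg).
  apply pos_var_le; intros B b _; specialize (HK B b); apply Rabs_bounds in HK; lra.
Qed.

End PosVar.

Section TotalVariation.
Variable phi : (O -> Prop) -> R.
Hypothesis Hadd : additive phi.
Hypothesis Hbd : bounded phi.

(** The sum over a finite partition is [phi C - phi D] for some [C], [D]
    inside the union of the partition (positive and negative pieces). *)
Definition list_union (l : list (O -> Prop)) : O -> Prop := fun x => exists B, In B l /\ B x.

Lemma partition_sum (l : list (O -> Prop)) :
  (forall B, In B l -> Alg B) ->
  (forall i j, (i < j)%nat -> (j < length l)%nat -> disjoint (nth i l set0) (nth j l set0)) ->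
  exists C D, Alg C /\ Alg D /\ subset C (list_union l) /\ subset D (list_union l) /\
    Rsum_list (map (fun B => Rabs (phi B)) l) = phi C - phi D.
Proof.
  induction l as [| B l IH]; intros hA hD.
  - exists set0, set0; repeat split; auto with alg; try (intros x []).
    simpl; rewrite (additive_set0 phi Hadd); lra.
  - destruct IH as [C [D [c [d [sc [sd e]]]]]];
      [intros; apply hA; simpl; auto | intros i j h1 h2; apply (hD (S i) (S j)); simpl; lia |].
    assert (b : Alg B) by (apply hA; simpl; auto).
    assert (dB : forall x, B x -> list_union l x -> False).
    { intros x bx [B' [i bx']]; destruct (In_nth l B' set0 i) as [k [k1 k2]].
      refine (hD 0%nat (S k) _ _ x _); simpl; try lia; split; auto; rewrite k2; auto. }
    assert (sub_cons : forall E, subset E (list_union l) -> subset E (list_union (B :: l)))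
      by (intros E hE x u; destruct (hE x u) as [B' [i u']]; exists B'; split; simpl; auto).
    assert (B_cons : subset B (list_union (B :: l))) by (intros x u; exists B; simpl; auto).
    simpl; rewrite e; destruct (Rle_lt_dec 0 (phi B)) as [p | p].
    + exists (setU B C), D; split; [| split; [| split; [| split]]]; auto with alg.
      * intros x [u | u]; [apply B_cons | apply (sub_cons C sc)]; auto.
      * rewrite Hadd; [rewrite Rabs_right; lra | auto | auto | intros x [u v]; apply (dB x); auto].
    + exists C, (setU B D); split; [| split; [| split; [| split]]]; auto with alg.
      * intros x [u | u]; [apply B_cons | apply (sub_cons D sd)]; auto.
      * rewrite Hadd; [rewrite Rabs_left; lra | auto | auto | intros x [u v]; apply (dB x); auto].
Qed.

Lemma partition_sum_le A l : is_partition Alg A l ->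
  Rsum_list (map (fun B => Rabs (phi B)) l) <= pos_var phi A + pos_var (opp_sf phi) A.
Proof.
  intros [h1 [h2 h3]]; destruct (partition_sum l h1 h2) as [C [D [c [d [sc [sd ->]]]]]].
  assert (phi C <= pos_var phi A) by (apply pos_var_ge; auto; intros x u; apply h3, sc, u).
  assert (opp_sf phi D <= pos_var (opp_sf phi) A)
    by (apply pos_var_ge; auto with alg; intros x u; apply h3, sd, u).
  unfold opp_sf in *; lra.
Qed.

Lemma partition_sums_bound A :
  bound (fun s => exists l, is_partition Alg A l /\ s = Rsum_list (map (fun B => Rabs (phi B)) l)).
Proof.
  exists (pos_var phi A + pos_var (opp_sf phi) A); intros s [l [p ->]]; apply partition_sum_le; auto.
Qed.

(** Conversely, [phi C - phi D] is a partition sum over [C \ D], [D \ C]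
    and the rest of [A]. *)
Lemma tv_ge_diff A C D : Alg A -> Alg C -> Alg D -> subset C A -> subset D A ->
  phi C - phi D <= tv Alg phi A.
Proof.
  intros a c d sC sD.
  set (R0 := setD A (setU (setD C D) (setD D C))).
  set (l := setD C D :: setD D C :: R0 :: nil).
  assert (hp : is_partition Alg A l).
  { split; [| split].
    - intros B h; simpl in h; unfold R0 in h; destruct h as [<- | [<- | [<- | []]]]; auto with alg.
    - intros i j h1 h2; simpl in h2.
      destruct i as [| [| [| i]]]; destruct j as [| [| [| j]]]; try lia; simpl; intros x;
        unfold R0, setD, setU; tauto.
    - intros x; split.
      + intro u; destruct (classic (C x)); destruct (classic (D x)).
        * exists R0; split; [simpl; auto | unfold R0, setD, setU; tauto].
        * exists (setD C D); split; [simpl; auto | unfold setD; tauto].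
        * exists (setD D C); split; [simpl; auto | unfold setD; tauto].
        * exists R0; split; [simpl; auto | unfold R0, setD, setU; tauto].
      + intros [B [h u]]; simpl in h; unfold R0 in h.
        destruct h as [<- | [<- | [<- | []]]]; unfold setD in u; intuition. }
  assert (hl : Rsum_list (map (fun B => Rabs (phi B)) l) <= tv Alg phi A)
    by (apply Rsup_ub; [apply partition_sums_bound | exists l; split; auto]).
  unfold l in hl; simpl in hl.
  assert (e1 := additive_split phi Hadd C D c d).
  assert (e2 := additive_split phi Hadd D C d c).
  replace (setI D C) with (setI C D) in e2 by (apply set_ext; unfold setI; tauto).
  assert (r1 := Rle_abs (phi (setD C D))).
  assert (r2 := Rabs_Ropp (phi (setD D C))); assert (r3 := Rle_abs (- phi (setD D C))).
  assert (r4 := Rabs_pos (phi R0)); lra.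
Qed.

Lemma tv_jordan A : Alg A -> tv Alg phi A = pos_var phi A + pos_var (opp_sf phi) A.
Proof.
  intro a; apply Rle_antisym.
  - apply Rsup_le; [| intros s [l [p ->]]; apply partition_sum_le; auto].
    exists (Rsum_list (map (fun B => Rabs (phi B)) (A :: nil))), (A :: nil); split; auto.
    split; [| split]; [intros B [<- | []]; auto | intros i j h1 h2; simpl in h2; lia |].
    intro x; split; [intro u; exists A; simpl; auto | intros [B [[<- | []] u]]; auto].
  - enough (pos_var phi A <= tv Alg phi A - pos_var (opp_sf phi) A) by lra.
    apply pos_var_le; intros C c sC.
    enough (pos_var (opp_sf phi) A <= tv Alg phi A - phi C) by lra.
    apply pos_var_le; auto with alg; intros D d sD; unfold opp_sf.
    assert (phi C - phi D <= tv Alg phi A) by (apply tv_ge_diff; auto); lra.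
Qed.

Lemma tv_additive : additive (tv Alg phi).
Proof.
  intros A B a b d; rewrite !tv_jordan; auto with alg.
  rewrite pos_var_additive, (pos_var_additive (opp_sf phi)); auto with alg; lra.
Qed.

Lemma tv_nonneg : positive_sf Alg (tv Alg phi).
Proof.
  intros A a; rewrite tv_jordan; auto.
  assert (h1 := pos_var_nonneg phi Hadd Hbd A).
  assert (h2 := pos_var_nonneg (opp_sf phi) (opp_additive phi Hadd) (opp_bounded phi Hbd) A); lra.
Qed.

Lemma tv_mono A C : Alg A -> Alg C -> subset C A -> tv Alg phi C <= tv Alg phi A.
Proof. intros; apply positive_mono; auto using tv_additive, tv_nonneg. Qed.

Lemma tv_ge_abs A C : Alg A -> Alg C -> subset C A -> Rabs (phi C) <= tv Alg phi A.
Proof.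
  intros a c s.
  assert (phi C - phi set0 <= tv Alg phi A) by (apply tv_ge_diff; auto with alg; intros x []).
  assert (phi set0 - phi C <= tv Alg phi A) by (apply tv_ge_diff; auto with alg; intros x []).
  rewrite (additive_set0 phi Hadd) in *; unfold Rabs; destruct Rcase_abs; lra.
Qed.
End TotalVariation.

Section PositiveCharges.
Variables a b : (O -> Prop) -> R.
Hypotheses (Ha : additive a) (Hb : additive b).
Hypotheses (Pa : positive_sf Alg a) (Pb : positive_sf Alg b).
Hypothesis Hbd : bounded (fun B => a B - b B).

Lemma tv_diff_le A : Alg A -> tv Alg (fun B => a B - b B) A <= a A + b A.
Proof.
  intro hA; rewrite tv_jordan; auto using additive_minus.
  assert (pos_var (fun B => a B - b B) A <= a A).
  { apply pos_var_le; intros B hB s.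
    assert (a B <= a A) by (apply positive_mono; auto); assert (0 <= b B) by auto; lra. }
  assert (pos_var (opp_sf (fun B => a B - b B)) A <= b A).
  { apply pos_var_le; intros B hB s; unfold opp_sf.
    assert (b B <= b A) by (apply positive_mono; auto); assert (0 <= a B) by auto; lra. }
  lra.
Qed.
End PositiveCharges.

Lemma tv_positive a A : additive a -> positive_sf Alg a -> bounded a -> Alg A -> tv Alg a A = a A.
Proof.
  intros f p b hA; rewrite tv_jordan; auto.
  assert (pos_var a A <= a A) by (apply pos_var_le; intros; apply positive_mono; auto).
  assert (a A <= pos_var a A) by (apply pos_var_ge_self; auto).
  assert (pos_var (opp_sf a) A <= 0)
    by (apply pos_var_le; intros B hB _; unfold opp_sf; specialize (p B hB); lra).
  assert (0 <= pos_var (opp_sf a) A) by (apply pos_var_nonneg; auto with alg).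
  lra.
Qed.

(** Stability of [psing] under domination, sums on the left, and sums on
    the right (the latter via unions, the former via intersections). *)
Lemma psing_dom nu kappa nu' kappa' C : 0 <= C -> psing nu kappa ->
  (forall A, Alg A -> nu' A <= C * nu A) -> (forall A, Alg A -> kappa' A <= C * kappa A) ->
  psing nu' kappa'.
Proof.
  intros hC hs h1 h2 eps he.
  destruct (hs (eps / (C + 1))) as [A [hA k]]; [apply Rdiv_lt_0_compat; lra |].
  exists A; split; auto; specialize (h1 A hA); specialize (h2 (setC A) (alg_setC A hA)).
  assert (C * (nu A + kappa (setC A)) <= C * (eps / (C + 1))) by (apply Rmult_le_compat_l; lra).
  assert (C * (eps / (C + 1)) < eps); [| lra].
  apply Rmult_lt_reg_r with (C + 1); [lra |].
  replace (C * (eps / (C + 1)) * (C + 1)) with (C * eps) by (field; lra); nra.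
Qed.

Section PsingSum.
Variables nu1 nu2 kappa1 kappa2 : (O -> Prop) -> R.
Hypotheses (Hn1 : additive nu1) (Hn2 : additive nu2) (Hk1 : additive kappa1) (Hk2 : additive kappa2).
Hypotheses (Pn1 : positive_sf Alg nu1) (Pn2 : positive_sf Alg nu2).
Hypotheses (Pk1 : positive_sf Alg kappa1) (Pk2 : positive_sf Alg kappa2).

Lemma psing_plus_l : psing nu1 kappa1 -> psing nu2 kappa1 -> psing (fun A => nu1 A + nu2 A) kappa1.
Proof.
  intros h1 h2 eps he.
  destruct (h1 (eps / 2)) as [G1 [g1 k1]]; [lra |]; destruct (h2 (eps / 2)) as [G2 [g2 k2]]; [lra |].
  exists (setI G1 G2); split; auto with alg.
  assert (nu1 (setI G1 G2) <= nu1 G1) by (apply positive_mono; auto with alg; intros x [u _]; exact u).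
  assert (nu2 (setI G1 G2) <= nu2 G2) by (apply positive_mono; auto with alg; intros x [_ u]; exact u).
  replace (setC (setI G1 G2)) with (setU (setC G1) (setC G2))
    by (apply set_ext; unfold setC, setU, setI; intro x; split; [tauto | intro; apply NNPP; tauto]).
  assert (h := positive_subadd kappa1 Hk1 Pk1 (setC G1) (setC G2) (alg_setC _ g1) (alg_setC _ g2)).
  lra.
Qed.

Lemma psing_plus_r : psing nu1 kappa1 -> psing nu1 kappa2 -> psing nu1 (fun A => kappa1 A + kappa2 A).
Proof.
  intros h1 h2 eps he.
  destruct (h1 (eps / 2)) as [G1 [g1 k1]]; [lra |]; destruct (h2 (eps / 2)) as [G2 [g2 k2]]; [lra |].
  exists (setU G1 G2); split; auto with alg.
  assert (h := positive_subadd nu1 Hn1 Pn1 G1 G2 g1 g2).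
  assert (kappa1 (setC (setU G1 G2)) <= kappa1 (setC G1))
    by (apply positive_mono; auto with alg; intros x u v; apply u; left; exact v).
  assert (kappa2 (setC (setU G1 G2)) <= kappa2 (setC G2))
    by (apply positive_mono; auto with alg; intros x u v; apply u; right; exact v).
  lra.
Qed.
End PsingSum.

Definition finite_union (F : nat -> O -> Prop) (N : nat) : O -> Prop :=
  fun x => exists n, (n <= N)%nat /\ F n x.

Lemma finite_union_0 F : finite_union F 0 = F 0%nat.
Proof.
  apply set_ext; intro x; unfold finite_union; split; [| intro; exists 0%nat; auto].
  intros [n [h u]]; replace n with 0%nat in u by lia; auto.
Qed.

Lemma finite_union_S F N : finite_union F (S N) = setU (finite_union F N) (F (S N)).
Proof.
  apply set_ext; intro x; unfold finite_union, setU; split.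
  - intros [n [h u]]; destruct (Nat.eq_dec n (S N)) as [-> | ne]; [right; auto |].
    left; exists n; split; auto; lia.
  - intros [[n [h u]] | u]; [exists n; split; auto | exists (S N); split; auto].
Qed.

Lemma alg_finite_union F N : (forall n, Alg (F n)) -> Alg (finite_union F N).
Proof. intro h; induction N; [rewrite finite_union_0 | rewrite finite_union_S]; auto with alg. Qed.


Definition ntv (sig : nat -> (O -> Prop) -> R) (n : nat) (A : O -> Prop) : R :=
  tv Alg (sig n) A / Rmax 1 (ba_norm Alg (sig n)).

Definition cc_term (sig : nat -> (O -> Prop) -> R) (alpha : nat -> R) (A : O -> Prop) (n : nat) : R :=
  alpha n * ntv sig n A.

Section CountableCombination.
Variable sig : nat -> (O -> Prop) -> R.
Hypotheses (Hsadd : forall n, additive (sig n)) (Hsbd : forall n, bounded (sig n)).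
Variable alpha : nat -> R.
Hypotheses (Hanneg : forall n, 0 <= alpha n) (Hasum : infinite_sum alpha 1).

Lemma ntv_bounds n A : Alg A -> 0 <= ntv sig n A <= 1.
Proof.
  intro hA; unfold ntv, ba_norm; set (c := Rmax 1 (tv Alg (sig n) setT)).
  assert (h1 : 1 <= c) by apply Rmax_l; assert (h2 : tv Alg (sig n) setT <= c) by apply Rmax_r.
  assert (t0 := tv_nonneg (sig n) (Hsadd n) (Hsbd n) A hA).
  assert (t1 := tv_mono (sig n) (Hsadd n) (Hsbd n) setT A alg_setT hA (fun x _ => I)).
  split; [unfold Rdiv; apply Rmult_le_pos; [lra | apply Rlt_le, Rinv_0_lt_compat; lra] |].
  apply Rmult_le_reg_r with c; [lra |]; unfold Rdiv; rewrite Rmult_assoc, Rinv_l; lra.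
Qed.

Lemma cc_term_bounds A n : Alg A -> 0 <= cc_term sig alpha A n <= alpha n.
Proof.
  intro hA; unfold cc_term; destruct (ntv_bounds n A hA); specialize (Hanneg n); split; [nra |].
  rewrite <- (Rmult_1_r (alpha n)) at 2; apply Rmult_le_compat_l; auto.
Qed.

Lemma cc_term_summable A : Alg A -> exists l, infinite_sum (cc_term sig alpha A) l.
Proof.
  intro hA; destruct (growing_cv (fun N => sum_f_R0 (cc_term sig alpha A) N)) as [l hl]; eauto.
  - intro n; simpl; destruct (cc_term_bounds A (S n) hA); lra.
  - exists 1; intros x [i ->]; apply Rle_trans with (sum_f_R0 alpha i).
    + apply sum_Rle; intros; apply cc_term_bounds; auto.
    + apply sum_incr; auto.
Qed.

Variable m : (O -> Prop) -> R.
Hypothesis Hm : forall A, Alg A -> infinite_sum (cc_term sig alpha A) (m A).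

Lemma cc_additive : additive m.
Proof.
  intros A B hA hB d; apply (UL_sequence (fun N => sum_f_R0 (cc_term sig alpha (setU A B)) N));
    [apply Hm; auto with alg |].
  eapply Un_cv_ext; [| exact (CV_plus _ _ _ _ (Hm A hA) (Hm B hB))].
  intro N; simpl; rewrite <- plus_sum; apply sum_eq; intros i _.
  unfold cc_term, ntv; rewrite (tv_additive (sig i) (Hsadd i) (Hsbd i)); auto; lra.
Qed.

Lemma cc_ge_term A k : Alg A -> cc_term sig alpha A k <= m A.
Proof.
  intro hA; apply Rle_trans with (sum_f_R0 (cc_term sig alpha A) k).
  - destruct k; simpl; [lra |].
    assert (0 <= sum_f_R0 (cc_term sig alpha A) k)
      by (apply sum_nonneg; intro; apply cc_term_bounds; auto).
    destruct (cc_term_bounds A (S k) hA); lra.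
  - apply sum_incr; [apply Hm; auto | intro; apply cc_term_bounds; auto].
Qed.

Lemma cc_positive : positive_sf Alg m.
Proof. intros A hA; apply Rle_trans with (cc_term sig alpha A 0); [apply cc_term_bounds | apply cc_ge_term]; auto. Qed.

Lemma cc_bounded : bounded m.
Proof.
  exists 1; intros A hA; rewrite Rabs_right by (apply Rle_ge, cc_positive; auto).
  apply (cv_le _ _ _ (Hm A hA)); intro k; apply Rle_trans with (sum_f_R0 alpha k).
  - apply sum_Rle; intros; apply cc_term_bounds; auto.
  - apply sum_incr; auto.
Qed.

Lemma tv_le_cc n A : Alg A -> alpha n * tv Alg (sig n) A <= Rmax 1 (ba_norm Alg (sig n)) * m A.
Proof.
  intro hA; assert (h := cc_ge_term A n hA); unfold cc_term, ntv in h.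
  set (c := Rmax 1 (ba_norm Alg (sig n))) in *; assert (1 <= c) by apply Rmax_l.
  replace (alpha n * tv Alg (sig n) A) with (c * (alpha n * (tv Alg (sig n) A / c))) by (field; lra).
  apply Rmult_le_compat_l; lra.
Qed.

Lemma cc_tail A N : Alg A -> m A <= sum_f_R0 (cc_term sig alpha A) N + (1 - sum_f_R0 alpha N).
Proof.
  intro hA; apply (cv_le _ _ _ (Hm A hA)); intro k.
  assert (hs : sum_f_R0 alpha N <= 1) by (apply sum_incr; auto).
  destruct (Compare_dec.le_lt_dec k N).
  - assert (sum_f_R0 (cc_term sig alpha A) k <= sum_f_R0 (cc_term sig alpha A) N)
      by (apply sum_mono_index; auto; intro; apply cc_term_bounds; auto).
    lra.
  - assert (sum_f_R0 alpha k <= 1) by (apply sum_incr; auto).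
    replace k with (N + (k - N))%nat in * by lia.
    assert (h := sum_increment_le (cc_term sig alpha A) alpha N (k - N)
                   (fun i => proj2 (cc_term_bounds A i hA))).
    lra.
Qed.

Lemma cc_small N eta G : Alg G -> (forall n, (n <= N)%nat -> tv Alg (sig n) G <= eta) ->
  m G <= eta + (1 - sum_f_R0 alpha N).
Proof.
  intros hG hn; assert (t := cc_tail G N hG).
  assert (sum_f_R0 (cc_term sig alpha G) N <= eta * sum_f_R0 alpha N).
  { rewrite scal_sum; apply sum_Rle; intros n hn'; unfold cc_term, ntv.
    set (c := Rmax 1 (ba_norm Alg (sig n))); assert (1 <= c) by apply Rmax_l.
    assert (tn := tv_nonneg (sig n) (Hsadd n) (Hsbd n) G hG).
    assert (tv Alg (sig n) G / c <= eta); [| specialize (Hanneg n); nra].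
    apply Rle_trans with (tv Alg (sig n) G); auto.
    apply Rmult_le_reg_r with c; [lra |]; unfold Rdiv; rewrite Rmult_assoc, Rinv_l; nra. }
  assert (sum_f_R0 alpha N <= 1) by (apply sum_incr; auto).
  assert (0 <= sum_f_R0 alpha N) by (apply sum_nonneg; auto).
  assert (0 <= eta)
    by (apply Rle_trans with (tv Alg (sig 0%nat) G);
        [apply tv_nonneg; auto | apply hn; lia]).
  nra.
Qed.
End CountableCombination.

Lemma cc_ucont sig alpha m sig' alpha' m' :
  (forall n, additive (sig n)) -> (forall n, bounded (sig n)) ->
  (forall n, 0 < alpha n) -> infinite_sum alpha 1 ->
  (forall A, Alg A -> infinite_sum (cc_term sig alpha A) (m A)) ->
  (forall n, additive (sig' n)) -> (forall n, bounded (sig' n)) ->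
  (forall n, 0 <= alpha' n) -> infinite_sum alpha' 1 ->
  (forall A, Alg A -> infinite_sum (cc_term sig' alpha' A) (m' A)) ->
  (forall n, exists j, sig' n = sig j) ->
  ucont m' m.
Proof.
  intros f b ap asum hm f' b' ap' asum' hm' hsub eps he.
  assert (ap0 : forall n, 0 <= alpha n) by (intro n; apply Rlt_le; auto).
  assert (hterm : forall n, exists c, 0 <= c /\
            forall B, Alg B -> cc_term sig' alpha' B n <= c * m B).
  { intro n; destruct (hsub n) as [j hj]; exists (alpha' n / alpha j).
    specialize (ap j); specialize (ap' n); split; [unfold Rdiv; apply Rmult_le_pos; [lra | apply Rlt_le, Rinv_0_lt_compat; lra] |].
    intros B hB; assert (g := cc_ge_term sig f b alpha ap0 m hm B j hB).
    unfold cc_term, ntv in *; rewrite hj.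
    replace (alpha' n / alpha j * m B) with (alpha' n * (m B / alpha j)) by (field; lra).
    apply Rmult_le_compat_l; auto; apply Rmult_le_reg_l with (alpha j); auto.
    replace (alpha j * (m B / alpha j)) with (m B) by (field; lra); exact g. }
  assert (hsum : forall N, exists C, 0 <= C /\
            forall B, Alg B -> sum_f_R0 (cc_term sig' alpha' B) N <= C * m B).
  { induction N as [| N [C [hC hN]]]; [apply hterm |].
    destruct (hterm (S N)) as [c [hc k]]; exists (C + c); split; [lra |].
    intros B hB; simpl; specialize (hN B hB); specialize (k B hB); lra. }
  destruct (weights_tail alpha' (eps / 2) asum') as [N hN]; [lra |].
  destruct (hsum N) as [C [hC k]].
  exists (eps / (2 * (C + 1))); split; [apply Rdiv_lt_0_compat; lra |]; intros B hB mB.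
  assert (t := cc_tail sig' f' b' alpha' ap' asum' m' hm' B N hB).
  assert (0 <= m B) by (apply (cc_positive sig f b alpha ap0 m hm); auto).
  assert (C * m B <= eps / 2); [| specialize (k B hB); specialize (hN N (le_n N)); lra].
  apply Rle_trans with (C * (eps / (2 * (C + 1)))); [apply Rmult_le_compat_l; lra |].
  apply Rmult_le_reg_r with (2 * (C + 1)); [lra |].
  replace (C * (eps / (2 * (C + 1))) * (2 * (C + 1))) with (C * eps) by (field; lra).
  replace (eps / 2 * (2 * (C + 1))) with (C * eps + eps) by field; lra.
Qed.

(** A positive charge singular to each [sig n] is singular to any
    combination of them: first for finitely many at once, then in the limit. *)
Section SingularCombination.
Variable nu : (O -> Prop) -> R.
Hypotheses (Hnadd : additive nu) (Hnpos : positive_sf Alg nu).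
Variable sig : nat -> (O -> Prop) -> R.
Hypotheses (Hsadd : forall n, additive (sig n)) (Hsbd : forall n, bounded (sig n)).
Hypothesis Hsing : forall n, psing nu (tv Alg (sig n)).

Lemma psing_finitely_many N eta : 0 < eta ->
  exists G, Alg G /\ nu G <= INR (S N) * eta /\
    forall n, (n <= N)%nat -> tv Alg (sig n) (setC G) <= eta.
Proof.
  intro he; induction N as [| N [G [hG [hnu htv]]]].
  - destruct (Hsing 0%nat eta he) as [G [hG k]]; exists G; split; auto.
    assert (0 <= nu G) by auto; assert (0 <= tv Alg (sig 0%nat) (setC G))
      by (apply tv_nonneg; auto with alg).
    simpl; split; [lra | intros n hn; replace n with 0%nat by lia; lra].
  - destruct (Hsing (S N) eta he) as [F [hF k]].
    assert (0 <= nu F) by auto; assert (0 <= tv Alg (sig (S N)) (setC F))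
      by (apply tv_nonneg; auto with alg).
    exists (setU G F); split; auto with alg; split.
    + assert (h := positive_subadd nu Hnadd Hnpos G F hG hF); rewrite S_INR; lra.
    + intros n hn; destruct (Nat.eq_dec n (S N)) as [-> | ne].
      * apply Rle_trans with (tv Alg (sig (S N)) (setC F)); [apply tv_mono; auto with alg; intros x u v; apply u; right; exact v | lra].
      * apply Rle_trans with (tv Alg (sig n) (setC G)); [apply tv_mono; auto with alg; intros x u v; apply u; left; exact v |].
        apply htv; lia.
Qed.

Variable alpha : nat -> R.
Hypotheses (Hanneg : forall n, 0 <= alpha n) (Hasum : infinite_sum alpha 1).
Variable m : (O -> Prop) -> R.
Hypothesis Hm : forall A, Alg A -> infinite_sum (cc_term sig alpha A) (m A).

Lemma psing_combination : psing nu m.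
Proof.
  intros eps he; destruct (weights_tail alpha (eps / 2) Hasum) as [N hN]; [lra |].
  assert (hI : 0 < INR (S N)) by apply lt_0_INR, Nat.lt_0_succ.
  destruct (psing_finitely_many N (eps / (4 * INR (S N)))) as [G [hG [hnu htv]]].
  { apply Rdiv_lt_0_compat; lra. }
  exists G; split; auto.
  assert (t := cc_small sig Hsadd Hsbd alpha Hanneg Hasum m Hm N _ (setC G) (alg_setC G hG) htv).
  specialize (hN N (le_n N)).
  replace (INR (S N) * (eps / (4 * INR (S N)))) with (eps / 4) in hnu by (field; lra).
  assert (eps / (4 * INR (S N)) <= eps / 4); [| lra].
  unfold Rdiv; apply Rmult_le_compat_l; [lra |]; apply Rinv_le_contravar; [lra |].
  assert (1 <= INR (S N)) by (apply (le_INR 1); lia); lra.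
Qed.
End SingularCombination.

Section BestControl.
Variable M : ((O -> Prop) -> R) -> Prop.
Hypotheses (HMadd : forall mu, M mu -> additive mu) (HMbd : forall mu, M mu -> bounded mu).

Definition seq_in_M (s : nat -> (O -> Prop) -> R) : Prop := forall n, M (s n).

Definition cons_seq (mu : (O -> Prop) -> R) (s : nat -> (O -> Prop) -> R) (n : nat) : (O -> Prop) -> R :=
  match n with 0%nat => mu | S k => s k end.

Definition control (s : nat -> (O -> Prop) -> R) (A : O -> Prop) : R :=
  series_sum (cc_term s geom A).

Section OneSequence.
Variable s : nat -> (O -> Prop) -> R.
Hypothesis Hs : seq_in_M s.

Lemma control_sum A : Alg A -> infinite_sum (cc_term s geom A) (control s A).
Proof.
  intro hA; apply series_sum_spec.
  apply (cc_term_summable s (fun n => HMadd _ (Hs n)) (fun n => HMbd _ (Hs n)) geom geom_nonneg geom_sum A hA).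
Qed.

Lemma control_additive : additive (control s).
Proof. exact (cc_additive s (fun n => HMadd _ (Hs n)) (fun n => HMbd _ (Hs n)) geom _ control_sum). Qed.

Lemma control_positive : positive_sf Alg (control s).
Proof. exact (cc_positive s (fun n => HMadd _ (Hs n)) (fun n => HMbd _ (Hs n)) geom geom_nonneg _ control_sum). Qed.

End OneSequence.

#[local] Hint Resolve control_additive control_positive : alg.

Lemma control_stronger s s' : seq_in_M s -> seq_in_M s' -> (forall n, exists j, s' n = s j) ->
  forall phi, additive phi -> bounded phi ->
  forall A, sing_part phi (control s) A <= sing_part phi (control s') A.
Proof.
  intros hs hs' h phi f b A; apply sing_part_mono_control; auto with alg.
  apply (cc_ucont s geom (control s) s' geom (control s'));
    auto using geom_pos, geom_nonneg, geom_sum, control_sum; intro n; auto.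
Qed.

Variable rho : (O -> Prop) -> R.
Hypotheses (Hradd : additive rho) (Hrbd : bounded rho).
Variable mu0 : (O -> Prop) -> R.
Hypothesis Hmu0 : M mu0.

Definition residual (s : nat -> (O -> Prop) -> R) : R := sing_part rho (control s) setT.
Definition min_residual : R := Rinf (fun y => exists s, seq_in_M s /\ y = residual s).

Lemma min_residual_le s : seq_in_M s -> min_residual <= residual s.
Proof.
  intro hs; apply Rinf_lb; [| eauto].
  intros y [s' [h ->]]; apply sing_part_nonneg; auto with alg.
Qed.

Lemma min_residual_approx k : exists s, seq_in_M s /\ residual s <= min_residual + / (INR k + 1).
Proof.
  assert (hk : 0 < / (INR k + 1)) by (apply Rinv_0_lt_compat; assert (h := pos_INR k); lra).
  destruct (Rinf_approx (fun y => exists s, seq_in_M s /\ y = residual s) _ hk)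
    as [x [[s [hs ->]] hx]]; eauto.
  exists (residual (fun _ => mu0)), (fun _ => mu0); split; auto; intro; auto.
Qed.

(** Interleaving the approximating sequences (via a pairing of [nat])
    gives a sequence attaining the infimum. *)
Definition near_min (k : nat) : nat -> (O -> Prop) -> R :=
  proj1_sig (constructive_indefinite_description _ (min_residual_approx k)).

Lemma near_min_spec k : seq_in_M (near_min k) /\ residual (near_min k) <= min_residual + / (INR k + 1).
Proof. unfold near_min; destruct constructive_indefinite_description as [s h]; exact h. Qed.

Definition diag_seq (j : nat) : (O -> Prop) -> R := near_min (fst (of_nat j)) (snd (of_nat j)).

Lemma diag_seq_in_M : seq_in_M diag_seq.
Proof. intro j; apply (proj1 (near_min_spec _)). Qed.

Lemma diag_seq_minimal : residual diag_seq = min_residual.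
Proof.
  apply Rle_antisym; [| apply min_residual_le, diag_seq_in_M].
  apply le_epsilon; intros eta he; destruct (archimed_cor1 eta he) as [N [h1 h2]].
  destruct (near_min_spec N) as [hs hw].
  assert (residual diag_seq <= residual (near_min N)).
  { apply control_stronger; auto using diag_seq_in_M.
    intro n; exists (to_nat (N, n)); unfold diag_seq; rewrite cancel_of_to; reflexivity. }
  assert (/ (INR N + 1) <= / INR N) by (apply Rinv_le_contravar; [apply lt_0_INR; auto | lra]).
  lra.
Qed.

Definition best_control : (O -> Prop) -> R := control diag_seq.

Lemma best_control_in_AM : in_AM Alg M best_control.
Proof.
  exists diag_seq, geom; repeat split; auto using diag_seq_in_M, geom_nonneg, geom_sum.
  intros A hA; apply (control_sum diag_seq diag_seq_in_M A hA).
Qed.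

Lemma best_control_extend mu : M mu ->
  forall A, Alg A -> sing_part rho best_control A <= sing_part rho (control (cons_seq mu diag_seq)) A.
Proof.
  intros hmu A hA; set (s' := cons_seq mu diag_seq).
  assert (hs' : seq_in_M s') by (intros [| k]; simpl; auto; apply diag_seq_in_M).
  assert (e1 := control_stronger s' diag_seq hs' diag_seq_in_M
                  (fun n => ex_intro _ (S n) eq_refl) rho Hradd Hrbd (setC A)).
  assert (e2 := min_residual_le s' hs'); rewrite <- diag_seq_minimal in e2.
  assert (c1 := additive_compl _ (sing_part_additive rho (control s') Hradd Hrbd
                  (control_additive s' hs') (control_positive s' hs')) A hA).
  assert (c2 := additive_compl _ (sing_part_additive rho best_control Hradd Hrbd
                  (control_additive _ diag_seq_in_M) (control_positive _ diag_seq_in_M)) A hA).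
  unfold residual, best_control in *; lra.
Qed.

Lemma best_control_singular mu : M mu -> psing (sing_part rho best_control) (tv Alg mu).
Proof.
  intro hmu; set (s' := cons_seq mu diag_seq).
  assert (hs' : seq_in_M s') by (intros [| k]; simpl; auto; apply diag_seq_in_M).
  set (c := Rmax 1 (ba_norm Alg mu)); assert (hc : 1 <= c) by apply Rmax_l.
  apply (psing_dom (sing_part rho (control s')) (control s') _ _ (2 * c)); [lra | | |].
  - apply sing_part_singular; auto with alg.
  - intros A hA; assert (h := best_control_extend mu hmu A hA); fold s' in h.
    assert (0 <= sing_part rho (control s') A) by (apply sing_part_nonneg; auto with alg); nra.
  - intros A hA.
    assert (h := tv_le_cc s' (fun n => HMadd _ (hs' n)) (fun n => HMbd _ (hs' n)) geom geom_nonneg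
                   (control s') (control_sum s' hs') 0%nat A hA).
    unfold geom in h; simpl in h; fold c in h; lra.
Qed.
End BestControl.

Lemma ca_minus a b : countably_additive Alg a -> countably_additive Alg b ->
  countably_additive Alg (fun A => a A - b A).
Proof.
  intros ha hb F h1 h2 h3; eapply Un_cv_ext; [| exact (CV_minus _ _ _ _ (ha F h1 h2 h3) (hb F h1 h2 h3))].
  intro n; simpl; rewrite minus_sum; reflexivity.
Qed.

Section CountableUnion.
Variable F : nat -> O -> Prop.
Hypotheses (HF : forall n, Alg (F n)) (Hdj : forall i j, i <> j -> disjoint (F i) (F j)).
Let U : O -> Prop := fun x => exists n, F n x.
Hypothesis HU : Alg U.

Lemma additive_finite_union phi N : additive phi ->
  phi (finite_union F N) = sum_f_R0 (fun n => phi (F n)) N.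
Proof.
  intro f; induction N; [rewrite finite_union_0; reflexivity |].
  rewrite finite_union_S, tech5, f, IHN; auto using alg_finite_union.
  intros x [[n [h a]] b]; refine (Hdj n (S N) _ x _); [lia | split; auto].
Qed.

Lemma finite_union_sub N : subset (finite_union F N) U.
Proof. intros x [n [_ a]]; exists n; auto. Qed.

Lemma additive_tail phi N : additive phi ->
  phi U = sum_f_R0 (fun n => phi (F n)) N + phi (setD U (finite_union F N)).
Proof.
  intro f; rewrite <- additive_finite_union; auto.
  apply additive_sub; auto using alg_finite_union, finite_union_sub.
Qed.

Lemma ca_dominated_seq nu rho : additive nu -> additive rho ->
  (forall A, Alg A -> 0 <= nu A <= rho A) ->
  infinite_sum (fun n => rho (F n)) (rho U) -> infinite_sum (fun n => nu (F n)) (nu U).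
Proof.
  intros fn fr b h eps he; destruct (h eps he) as [N hN]; exists N; intros n hn.
  specialize (hN n hn); unfold Rdist in *.
  rewrite (additive_tail nu n fn); rewrite (additive_tail rho n fr) in hN.
  assert (hR : Alg (setD U (finite_union F n))) by auto using alg_setD, alg_finite_union.
  destruct (b _ hR); rewrite Rabs_left1 in * by lra; lra.
Qed.

Lemma pos_var_ca_seq lam : additive lam -> bounded lam -> countably_additive Alg lam ->
  infinite_sum (fun n => pos_var lam (F n)) (pos_var lam U).
Proof.
  intros f b ca.
  assert (fP := pos_var_additive lam f b); assert (pP := pos_var_nonneg lam f b).
  set (s := fun N => sum_f_R0 (fun n => pos_var lam (F n)) N).
  assert (sle : forall N, s N <= pos_var lam U).
  { intro N; unfold s; rewrite <- additive_finite_union; auto.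
    apply positive_mono; auto using alg_finite_union, finite_union_sub; intros A _; apply pP. }
  destruct (growing_cv s) as [T hT]; [intro n; unfold s; simpl; specialize (pP (F (S n))); lra |
                                     exists (pos_var lam U); intros x [i ->]; auto |].
  assert (sT : forall N, s N <= T) by (intro N; apply sum_incr; auto).
  enough (pos_var lam U <= T) by (replace (pos_var lam U) with T by (apply Rle_antisym; auto;
                                   apply (cv_le _ _ _ hT); auto); exact hT).
  apply pos_var_le; auto; intros B hB sB.
  set (BF := fun n => setI B (F n)).
  assert (hBF : (fun x => exists n, BF n x) = B)
    by (apply set_ext; intro x; split; [intros [n [u _]]; auto |
        intro u; destruct (sB x u) as [n a]; exists n; split; auto]).
  assert (cB := ca BF (fun n => alg_setI _ _ hB (HF n))); rewrite hBF in cB.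
  apply (cv_le _ _ _ (cB (fun i j ij x => fun '(conj (conj _ u) (conj _ v)) => Hdj i j ij x (conj u v)) hB)).
  intro k; apply Rle_trans with (s k); [| auto].
  apply sum_Rle; intros n _; apply (pos_var_ge lam b); [unfold BF; auto with alg | intros x [_ u]; exact u].
Qed.
End CountableUnion.

Lemma ca_dominated nu rho : additive nu -> additive rho ->
  (forall A, Alg A -> 0 <= nu A <= rho A) -> countably_additive Alg rho -> countably_additive Alg nu.
Proof. intros fn fr b c F h1 h2 h3; apply (ca_dominated_seq F h1 h2 h3 nu rho); auto. Qed.

Lemma pos_var_ca lam : additive lam -> bounded lam -> countably_additive Alg lam ->
  countably_additive Alg (pos_var lam).
Proof. intros f b c F h1 h2 h3; apply pos_var_ca_seq; auto. Qed.

Lemma decomposition_unique lc lp lc' lp' m m' :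
  additive lc -> bounded lc -> additive lc' -> bounded lc' ->
  additive lp -> bounded lp -> additive lp' -> bounded lp' ->
  additive m -> positive_sf Alg m -> bounded m ->
  additive m' -> positive_sf Alg m' -> bounded m' ->
  (forall A, Alg A -> lc A + lp A = lc' A + lp' A) ->
  abs_cont Alg lc m -> abs_cont Alg lc' m' ->
  psing (fun A => tv Alg lp A + tv Alg lp' A) (fun A => m A + m' A) ->
  forall A, Alg A -> lc A = lc' A.
Proof.
  intros fc bc fc' bc' fp bp fp' bp' fm pm bm fm' pm' bm' e ac ac' hs A hA.
  enough (Rabs (lc A - lc' A) <= 0)
    by (destruct (Req_dec (lc A - lc' A) 0) as [z | z]; [lra |];
        apply Rabs_no_R0 in z; assert (h := Rabs_pos (lc A - lc' A)); lra).
  apply le_epsilon; intros eps he; rewrite Rplus_0_l.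
  destruct (ac (eps / 4)) as [d1 [hd1 k1]]; [lra |].
  destruct (ac' (eps / 4)) as [d2 [hd2 k2]]; [lra |].
  destruct (hs (Rmin (Rmin d1 d2) (eps / 4))) as [G [hG kG]];
    [repeat apply Rmin_glb_lt; lra |].
  assert (Rmin (Rmin d1 d2) (eps / 4) <= Rmin d1 d2) by apply Rmin_l.
  assert (Rmin (Rmin d1 d2) (eps / 4) <= eps / 4) by apply Rmin_r.
  assert (Rmin d1 d2 <= d1) by apply Rmin_l; assert (Rmin d1 d2 <= d2) by apply Rmin_r.
  assert (hGc : Alg (setC G)) by auto with alg.
  assert (0 <= m (setC G)) by auto; assert (0 <= m' (setC G)) by auto.
  assert (0 <= tv Alg lp G) by (apply tv_nonneg; auto).
  assert (0 <= tv Alg lp' G) by (apply tv_nonneg; auto).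
  assert (C1 : tv Alg lc (setC G) < eps / 4) by (apply k1; auto; rewrite tv_positive; auto; lra).
  assert (C2 : tv Alg lc' (setC G) < eps / 4) by (apply k2; auto; rewrite tv_positive; auto; lra).
  assert (i1 : Alg (setI A G)) by auto with alg; assert (i2 : Alg (setD A G)) by auto with alg.
  assert (q1 := tv_ge_abs lc fc bc (setC G) (setD A G) hGc i2 (fun z h => proj2 h)).
  assert (q2 := tv_ge_abs lc' fc' bc' (setC G) (setD A G) hGc i2 (fun z h => proj2 h)).
  assert (q3 := tv_ge_abs lp fp bp G (setI A G) hG i1 (fun z h => proj2 h)).
  assert (q4 := tv_ge_abs lp' fp' bp' G (setI A G) hG i1 (fun z h => proj2 h)).
  rewrite (additive_split lc fc A G), (additive_split lc' fc' A G) by auto.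
  replace (lc (setI A G) + lc (setD A G) - (lc' (setI A G) + lc' (setD A G))) with
    ((lp' (setI A G) - lp (setI A G)) + (lc (setD A G) - lc' (setD A G))) by (specialize (e _ i1); lra).
  eapply Rle_trans; [apply Rabs_triang |].
  eapply Rle_trans; [apply Rplus_le_compat; apply Rabs_triang |].
  rewrite !Rabs_Ropp; lra.
Qed.

Section MembersOfAM.
Variable M : ((O -> Prop) -> R) -> Prop.
Hypotheses (HMadd : forall mu, M mu -> additive mu) (HMbd : forall mu, M mu -> bounded mu).
Variable m : (O -> Prop) -> R.
Hypothesis Hm : in_AM Alg M m.

Lemma in_AM_charge : additive m /\ positive_sf Alg m /\ bounded m.
Proof.
  destruct Hm as [sig [alpha [h1 [h2 [h3 h4]]]]].
  assert (f : forall n, additive (sig n)) by auto; assert (b : forall n, bounded (sig n)) by auto.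
  split; [| split]; [exact (cc_additive sig f b alpha m h4) | exact (cc_positive sig f b alpha h2 m h4) |
                     exact (cc_bounded sig f b alpha h2 h3 m h4)].
Qed.

Lemma in_AM_psing nu : additive nu -> positive_sf Alg nu ->
  (forall mu, M mu -> psing nu (tv Alg mu)) -> psing nu m.
Proof.
  intros fn pn hs; destruct Hm as [sig [alpha [h1 [h2 [h3 h4]]]]].
  eapply (psing_combination nu fn pn sig); eauto.
Qed.
End MembersOfAM.

Lemma M_decomposition_unique M lam lc lp lc' lp' :
  (forall mu, M mu -> additive mu) -> (forall mu, M mu -> bounded mu) ->
  M_decomposition Alg M lam lc lp -> M_decomposition Alg M lam lc' lp' ->
  forall A, Alg A -> lc A = lc' A /\ lp A = lp' A.
Proof.
  intros HMadd HMbd [[fc bc] [[fp bp] [e [[m [am ac]] sg]]]]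
    [[fc' bc'] [[fp' bp'] [e' [[m' [am' ac']] sg']]]] A hA.
  destruct (in_AM_charge M HMadd HMbd m am) as [fm [pm bm]].
  destruct (in_AM_charge M HMadd HMbd m' am') as [fm' [pm' bm']].
  assert (tva := tv_additive lp fp bp); assert (tva' := tv_additive lp' fp' bp').
  assert (tvp := tv_nonneg lp fp bp); assert (tvp' := tv_nonneg lp' fp' bp').
  assert (tvsum : positive_sf Alg (fun B => tv Alg lp B + tv Alg lp' B))
    by (intros B hB; specialize (tvp B hB); specialize (tvp' B hB); lra).
  assert (hs : forall mu, M mu -> psing (fun B => tv Alg lp B + tv Alg lp' B) (tv Alg mu))
    by (intros mu hmu; apply psing_plus_l; auto using tv_additive, tv_nonneg;
        [apply sg | apply sg']; auto).
  assert (hsum : psing (fun B => tv Alg lp B + tv Alg lp' B) (fun B => m B + m' B))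
    by (apply psing_plus_r; auto using additive_plus; apply (in_AM_psing M); auto using additive_plus).
  assert (hc : lc A = lc' A).
  { apply (decomposition_unique lc lp lc' lp' m m'); auto.
    intros B hB; rewrite <- e, <- e'; auto. }
  split; auto; specialize (e A hA); specialize (e' A hA); lra.
Qed.

(** Existence: split [lam] into its positive and negative variations
    [lam_pos], [lam_neg], take the best control [ctrl] for
    [lam_abs = lam_pos + lam_neg], and split each variation into its
    [ctrl]-continuous and [ctrl]-singular parts. *)
Section Existence.
Variable M : ((O -> Prop) -> R) -> Prop.
Hypotheses (HMadd : forall mu, M mu -> additive mu) (HMbd : forall mu, M mu -> bounded mu).
Variable mu0 : (O -> Prop) -> R.
Hypothesis Hmu0 : M mu0.
Variable lam : (O -> Prop) -> R.
Hypotheses (Hladd : additive lam) (Hlbd : bounded lam).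

Definition lam_pos : (O -> Prop) -> R := pos_var lam.
Definition lam_neg (A : O -> Prop) : R := pos_var lam A - lam A.
Definition lam_abs (A : O -> Prop) : R := lam_pos A + lam_neg A.
Definition ctrl : (O -> Prop) -> R := best_control M lam_abs mu0 Hmu0.

Lemma lam_pos_charge : additive lam_pos /\ bounded lam_pos /\ positive_sf Alg lam_pos.
Proof.
  split; [| split]; [apply pos_var_additive | apply pos_var_bounded |]; auto.
  intros A _; apply pos_var_nonneg; auto.
Qed.

Lemma lam_neg_charge : additive lam_neg /\ bounded lam_neg /\ positive_sf Alg lam_neg.
Proof.
  destruct lam_pos_charge as [f [b p]].
  split; [| split]; [apply additive_minus | apply bounded_minus |]; auto.
  intros A hA; assert (h := pos_var_ge_self lam Hlbd A hA); unfold lam_neg; lra.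
Qed.

Lemma lam_abs_charge : additive lam_abs /\ bounded lam_abs.
Proof.
  destruct lam_pos_charge as [f [b p]]; destruct lam_neg_charge as [f' [b' p']].
  split; [apply additive_plus | apply bounded_plus]; auto.
Qed.

Lemma ctrl_charge : in_AM Alg M ctrl /\ additive ctrl /\ positive_sf Alg ctrl /\ bounded ctrl.
Proof.
  assert (h := best_control_in_AM M HMadd HMbd lam_abs mu0 Hmu0).
  split; auto; apply (in_AM_charge M); auto.
Qed.

Section Parts.
Variable phi : (O -> Prop) -> R.
Hypotheses (Hadd : additive phi) (Hbd : bounded phi) (Hpos : positive_sf Alg phi).
Hypothesis Hle : forall A, Alg A -> phi A <= lam_abs A.

Lemma sing_part_bounds A : Alg A -> 0 <= sing_part phi ctrl A <= phi A.
Proof.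
  destruct ctrl_charge as [_ [f [p b]]]; intro hA; split;
    [apply sing_part_nonneg | apply sing_part_le_self]; auto.
Qed.

Lemma cont_part_bounds A : Alg A -> 0 <= phi A - sing_part phi ctrl A <= phi A.
Proof. intro hA; destruct (sing_part_bounds A hA); lra. Qed.

Lemma parts_charges : additive (sing_part phi ctrl) /\ bounded (sing_part phi ctrl) /\
  additive (fun A => phi A - sing_part phi ctrl A) /\ bounded (fun A => phi A - sing_part phi ctrl A).
Proof.
  destruct ctrl_charge as [_ [f [p b]]].
  assert (fs : additive (sing_part phi ctrl)) by (apply sing_part_additive; auto).
  split; [| split; [| split]]; auto using additive_minus;
    [apply (bounded_dom _ phi) | apply (bounded_dom _ phi)]; auto using sing_part_bounds, cont_part_bounds.
Qed.

Lemma sing_part_below_abs A : sing_part phi ctrl A <= sing_part lam_abs ctrl A.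
Proof.
  destruct ctrl_charge as [_ [f [p b]]]; destruct lam_abs_charge as [fa ba].
  apply sing_part_mono; auto.
Qed.

Lemma parts_ca : countably_additive Alg phi ->
  countably_additive Alg (sing_part phi ctrl) /\
  countably_additive Alg (fun A => phi A - sing_part phi ctrl A).
Proof.
  destruct parts_charges as [f1 [_ [f2 _]]].
  split; apply (ca_dominated _ phi); auto using sing_part_bounds, cont_part_bounds.
Qed.
End Parts.

Definition cont_part (A : O -> Prop) : R :=
  (lam_pos A - sing_part lam_pos ctrl A) - (lam_neg A - sing_part lam_neg ctrl A).
Definition singular_part (A : O -> Prop) : R :=
  sing_part lam_pos ctrl A - sing_part lam_neg ctrl A.

Lemma lam_pos_le_abs A : Alg A -> lam_pos A <= lam_abs A.
Proof. intro hA; destruct lam_neg_charge as [_ [_ p]]; specialize (p A hA); unfold lam_abs; lra. Qed.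

Lemma lam_neg_le_abs A : Alg A -> lam_neg A <= lam_abs A.
Proof. intro hA; destruct lam_pos_charge as [_ [_ p]]; specialize (p A hA); unfold lam_abs; lra. Qed.

Lemma existence_decomposition : M_decomposition Alg M lam cont_part singular_part.
Proof.
  destruct lam_pos_charge as [fP [bP pP]]; destruct lam_neg_charge as [fN [bN pN]].
  destruct ctrl_charge as [am [fm [pm bm]]].
  destruct (parts_charges lam_pos fP bP pP) as [fsP [bsP [fcP bcP]]].
  destruct (parts_charges lam_neg fN bN pN) as [fsN [bsN [fcN bcN]]].
  assert (bPN := sing_part_bounds lam_pos fP bP pP); assert (bNN := sing_part_bounds lam_neg fN bN pN).
  split; [change (additive cont_part /\ bounded cont_part); unfold cont_part;
          split; [apply additive_minus | apply bounded_minus]; auto |].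
  split; [change (additive singular_part /\ bounded singular_part); unfold singular_part;
          split; [apply additive_minus | apply bounded_minus]; auto |].
  split; [intros A hA; unfold cont_part, singular_part, lam_neg, lam_pos; ring |].
  split.
  - exists ctrl; split; auto; intros eps he.
    destruct (sing_part_abs_cont lam_pos ctrl fP bP fm pm (eps / 2)) as [d1 [hd1 k1]]; [lra |].
    destruct (sing_part_abs_cont lam_neg ctrl fN bN fm pm (eps / 2)) as [d2 [hd2 k2]]; [lra |].
    exists (Rmin d1 d2); split; [apply Rmin_glb_lt; auto |]; intros A hA h.
    rewrite tv_positive in h by auto.
    assert (ctrl A < d1) by (eapply Rlt_le_trans; [exact h | apply Rmin_l]).
    assert (ctrl A < d2) by (eapply Rlt_le_trans; [exact h | apply Rmin_r]).
    assert (t := tv_diff_le _ _ fcP fcN (fun B hB => proj1 (cont_part_bounds lam_pos fP bP pP B hB))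
                   (fun B hB => proj1 (cont_part_bounds lam_neg fN bN pN B hB))
                   (bounded_minus _ _ bcP bcN) A hA).
    specialize (k1 A hA ltac:(assumption)); specialize (k2 A hA ltac:(assumption)).
    unfold cont_part; lra.
  - intros mu hmu; apply (psing_dom (sing_part lam_abs ctrl) (tv Alg mu) _ _ 2); [lra | | |].
    + destruct lam_abs_charge as [fa ba]; apply best_control_singular; auto.
    + intros A hA.
      assert (t := tv_diff_le _ _ fsP fsN (fun B hB => proj1 (bPN B hB)) (fun B hB => proj1 (bNN B hB))
                     (bounded_minus _ _ bsP bsN) A hA).
      assert (s1 := sing_part_below_abs lam_pos fP bP lam_pos_le_abs A).
      assert (s2 := sing_part_below_abs lam_neg fN bN lam_neg_le_abs A).
      unfold singular_part; lra.
    + intros A hA; assert (0 <= tv Alg mu A) by (apply tv_nonneg; auto); lra.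
Qed.

Lemma existence_positive : positive_sf Alg lam ->
  positive_sf Alg cont_part /\ positive_sf Alg singular_part.
Proof.
  intro hpos; destruct lam_neg_charge as [fN [bN pN]].
  assert (z : forall A, Alg A -> lam_neg A = 0).
  { intros A hA; apply Rle_antisym; [| apply pN; auto]; unfold lam_neg.
    assert (pos_var lam A <= lam A); [| lra].
    apply pos_var_le; auto; intros B hB s; apply positive_mono; auto. }
  destruct lam_pos_charge as [fP [bP pP]].
  split; intros A hA; destruct (sing_part_bounds lam_pos fP bP pP A hA);
    destruct (sing_part_bounds lam_neg fN bN pN A hA); unfold cont_part, singular_part;
    rewrite (z A hA) in *; lra.
Qed.

Lemma existence_ca : countably_additive Alg lam ->
  countably_additive Alg cont_part /\ countably_additive Alg singular_part.
Proof.
  intro hca; destruct lam_pos_charge as [fP [bP pP]]; destruct lam_neg_charge as [fN [bN pN]].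
  assert (cP : countably_additive Alg lam_pos) by (apply pos_var_ca; auto).
  assert (cN : countably_additive Alg lam_neg) by (apply ca_minus; auto).
  destruct (parts_ca lam_pos fP bP pP cP); destruct (parts_ca lam_neg fN bN pN cN).
  split; apply ca_minus; auto.
Qed.

Lemma M_decomposition_exists : exists lc lp, M_decomposition Alg M lam lc lp /\
  (positive_sf Alg lam -> positive_sf Alg lc /\ positive_sf Alg lp) /\
  (countably_additive Alg lam -> countably_additive Alg lc /\ countably_additive Alg lp).
Proof.
  exists cont_part, singular_part.
  split; [| split]; [apply existence_decomposition | apply existence_positive | apply existence_ca].
Qed.
End Existence.
End Charges.

Theorem mainTheorem1 (Omega : Type) (Alg : (Omega -> Prop) -> Prop)
  (HAlg : is_algebra Alg)
  (lam : (Omega -> Prop) -> R) (Hlam : is_ba Alg lam)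
  (M : ((Omega -> Prop) -> R) -> Prop)
  (HM : forall mu, M mu -> is_ba Alg mu)
  (HMne : exists mu, M mu) :
  (exists lc lp, M_decomposition Alg M lam lc lp /\
     (positive_sf Alg lam -> positive_sf Alg lc /\ positive_sf Alg lp) /\
     (countably_additive Alg lam ->
        countably_additive Alg lc /\ countably_additive Alg lp)) /\
  (forall lc lp lc' lp',
     M_decomposition Alg M lam lc lp -> M_decomposition Alg M lam lc' lp' ->
     forall A, Alg A -> lc A = lc' A /\ lp A = lp' A).
Proof.
  assert (HMadd : forall mu, M mu -> additive Alg mu) by (intros mu h; exact (proj1 (HM mu h))).
  assert (HMbd : forall mu, M mu -> bounded Alg mu) by (intros mu h; exact (proj2 (HM mu h))).
  destruct Hlam as [Hladd Hlbd]; destruct HMne as [mu0 Hmu0]; split.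
  - exact (M_decomposition_exists Alg HAlg M HMadd HMbd mu0 Hmu0 lam Hladd Hlbd).
  - intros lc lp lc' lp'; apply M_decomposition_unique; auto.
Qed.
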